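(* Suppose the $[n, n-k]$-code $C=C_{\Omega}(D, kO)$ has covering radius $\rho(C)=n-\dim(C)-1=k-1$. Let $P\in E(\mathbb{F}_q)\setminus D$ be any rational point on the elliptic curve $E$ (writing $P=(\alpha,\beta)$ when $P\neq O$). Then: 1. Any vector $v\in C_{\Omega}(D, kO-P)\setminus C$ is a deep hole of $C$. 2. If $P=O$, then the syndrome of $v$ is $H(k)v^T=(0,\cdots,0,\sum_{i=1}^{n}\alpha_i^{k/2}v_i,0,\cdots, 0)^T$ if $k$ is even, and $H(k)v^T=(0,\cdots,0,\sum_{i=1}^{n}\alpha_i^{(k-3)/2}\beta_iv_i)^T$ if $k$ is odd. 3. If $P=(\alpha,\beta)\neq O$, then the syndrome of $v$ is $H(k)v^T=b(1,\alpha, \cdots, \alpha^{\lfloor k/2\rfloor}, \beta, \beta\alpha,\cdots, \beta\alpha^{\lfloor (k-3)/2\rfloor})^T$, where $b=\sum_{i=1}^{n}v_i \neq 0.$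
   Context: Let $\mathbb{F}_q$ be a finite field with $q$ elements, $q$ an odd prime power. Let $E$ be the elliptic curve over $\mathbb{F}_q$ given by $y^2=x^3+sx+t$ ($s,t\in\mathbb{F}_q$) together with the point at infinity $O$. Let $D=\{P_i=(\alpha_i,\beta_i)\mid i=1,\dots,n\}\subset E(\mathbb{F}_q)\setminus\{O\}$ be a set of $n$ rational points, and let $k$ be an integer with $2\le k\le n-2$. For a divisor $V$, $\mathcal{L}(V)$ is the Riemann–Roch space of rational functions $f$ with $\mathrm{div}(f)\ge -V$ (together with $0$), and $\Omega(V)$ is the space of Weil differentials $\omega$ with $\mathrm{div}(\omega)\ge V$ (together with $0$). For a divisor $G$ with support disjoint from $D$, the residue code $C_{\Omega}(D,G)$ is the image of $\Omega(G-D)\to\mathbb{F}_q^n$, $\omega\mapsto(\mathrm{res}_{P_1}(\omega),\dots,\mathrm{res}_{P_n}(\omega))$, and the functional code $C_{\mathcal{L}}(D,G)$ is the image of $\mathcal{L}(G)\to\mathbb{F}_q^n$, $f\mapsto(f(P_1),\dots,f(P_n))$; these two codes are dual to each other. Let $C=C_{\Omega}(D,kO)$, whose dual is $C_{\mathcal{L}}(D,kO)$. Since $\mathcal{L}(kO)$ has basis $\{x^iy^j\mid i\ge 0,\ j\in\{0,1\},\ 2i+3j\le k\}$, a parity-check matrix of $C$ is the $k\times n$ matrix $H(k)$ whose $i$-th column is $(1,\alpha_i,\dots,\alpha_i^{\lfloor k/2\rfloor},\beta_i,\alpha_i\beta_i,\dots,\alpha_i^{\lfloor (k-3)/2\rfloor}\beta_i)^T$.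 A deep hole of $C$ is a word $v\in\mathbb{F}_q^n$ whose Hamming distance to $C$ equals the covering radius $\rho(C)=\max_{u\in\mathbb{F}_q^n}\min_{c\in C}d(u,c)$. *)

From HB Require Import structures.
From mathcomp Require Import all_boot all_order all_algebra.
Set Implicit Arguments. Unset Strict Implicit. Unset Printing Implicit Defensive.
Import GRing.Theory.
Local Open Scope ring_scope.

Inductive point (F : Type) := PInf | PAff of F & F.
Arguments PInf {F}.
Arguments PAff {F}.

Definition on_curve (F : fieldType) (s t : F) (P : point F) : bool :=
  match P with
  | PInf => true
  | PAff a b => b ^+ 2 == a ^+ 3 + s * a + t
  end.

(* The r-th element (r = 0..k-1) of the basis of L(kO), in the order used for
   the rows of H(k): 1, x, ..., x^{floor(k/2)}, y, xy, ..., x^{floor((k-3)/2)} y,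
   evaluated at the affine point (a, b).  There are k./2.+1 + (k.-1)./2 = k
   such monomials for k >= 1. *)
Definition mono (F : fieldType) (k r : nat) (a b : F) : F :=
  if (r < k./2.+1)%N then a ^+ r else a ^+ (r - k./2.+1) * b.

Definition Hmat (F : fieldType) (n k : nat) (alpha beta : 'I_n -> F)
  : 'M[F]_(k, n) :=
  \matrix_(r < k, i < n) mono k r (alpha i) (beta i).

Definition evcol (F : fieldType) (k : nat) (a b : F) : 'cV[F]_k :=
  \col_(r < k) mono k r a b.

(* Functional code C_L(D, kO) = { (f(P_1),...,f(P_n)) | f in L(kO) },
   f written in the basis of L(kO) with coefficient row vector u. *)
Definition CL (F : finFieldType) (n k : nat) (alpha beta : 'I_n -> F)
  : {set 'rV[F]_n} :=
  [set c : 'rV[F]_n | [exists u : 'rV[F]_k, c == u *m Hmat k alpha beta]].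

(* Functional code C_L(D, kO - P):
   - P = O : L(kO - O) = L((k-1)O), with basis given by the same formula for k-1;
   - P = (a,b) affine : L(kO - P) = { f in L(kO) | f(P) = 0 }. *)
Definition CL_minus (F : finFieldType) (n k : nat) (alpha beta : 'I_n -> F)
  (P : point F) : {set 'rV[F]_n} :=
  match P with
  | PInf => CL k.-1 alpha beta
  | PAff a b =>
      [set c : 'rV[F]_n | [exists u : 'rV[F]_k,
         (u *m evcol k a b == 0) && (c == u *m Hmat k alpha beta)]]
  end.

Definition dual_code (F : finFieldType) (n : nat) (C : {set 'rV[F]_n})
  : {set 'rV[F]_n} :=
  [set v : 'rV[F]_n | [forall c in C, v *m c^T == 0]].

(* Residue codes, via the duality C_Omega(D,G) = C_L(D,G)^perp. *)
Definition COmega (F : finFieldType) (n k : nat) (alpha beta : 'I_n -> F)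
  : {set 'rV[F]_n} := dual_code (CL k alpha beta).

Definition COmega_minus (F : finFieldType) (n k : nat) (alpha beta : 'I_n -> F)
  (P : point F) : {set 'rV[F]_n} := dual_code (CL_minus k alpha beta P).

Definition hdist (F : finFieldType) (n : nat) (u v : 'rV[F]_n) : nat :=
  #|[set i : 'I_n | u 0 i != v 0 i]|.

Definition dist_to (F : finFieldType) (n : nat) (C : {set 'rV[F]_n})
  (u : 'rV[F]_n) : nat :=
  \big[minn/n]_(c in C) hdist u c.

Definition covering_radius (F : finFieldType) (n : nat) (C : {set 'rV[F]_n})
  : nat := \max_(u : 'rV[F]_n) dist_to C u.

Definition deep_hole (F : finFieldType) (n : nat) (C : {set 'rV[F]_n})
  (v : 'rV[F]_n) : Prop := dist_to C v = covering_radius C.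

From HB Require Import structures.
From mathcomp Require Import all_boot all_order all_algebra zify ring.
Set Implicit Arguments. Unset Strict Implicit. Unset Printing Implicit Defensive.
Import GRing.Theory.
Local Open Scope ring_scope.

(* Let c be a codeword of C and w = v - c.  Then w is orthogonal to the values on D
   of every function of L((k-1)O) if P = O, resp. of every f in L(kO) with f(P) = 0.
   Functions A(x) + B(x) y of L(mO) interpolate arbitrary values on any m - 1
   points of E: counting gives a nonzero function vanishing at m - 2 of them, and
   it cannot share all m - 1 points with one of exact pole order m, because the
   product of the x - x(Q) over the common zeros Q divides both the norm
   A^2 - B^2 (x^3 + s x + t), which pins down the pole order, and the cross term
   D A - C B, which has too small a degree.  Hence w = 0 as soon as its support
   has fewer than k - 1 points: d(v, C) >= k - 1 = rho(C).  As for the syndrome,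
   v is orthogonal to every row of H(k) except the one of pole order k when
   P = O; when P is affine, H(k) v^T is orthogonal to every u with u . ev(P) = 0,
   hence proportional to ev(P), whose first entry is 1. *)

(* The same [size p] may occur with different (convertible) instance paths for
   the coefficient ring, which [lia] would treat as distinct atoms; abstracting
   each size with [set] identifies them. *)
Ltac size_lia :=
  repeat match goal with H : context [size _] |- _ => revert H end;
  repeat match goal with |- context [size ?p] =>
    let n := fresh "n" in set n := size p; clearbody n end;
  intros; lia.

Section CurveFunctions.
Context {F : fieldType} (s t : F).
Implicit Types (A B C D : {poly F}) (X : seq (F * F)).

Definition horner_xy A B (p : F * F) : F := A.[p.1] + B.[p.1] * p.2.

Definition on_curve_xy (p : F * F) : bool := on_curve s t (PAff p.1 p.2).

Definition curve_rhs : {poly F} := 'X^3 + s *: 'X + t%:P.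

Definition abscissa_poly X : {poly F} := \prod_(p <- X) ('X - p.1%:P).

(* [A + B y] lies in L(jO): x and y have poles of order 2 and 3 at O, so the
   condition is 2 deg A <= j and 2 deg B + 3 <= j, written with size = deg + 1. *)
Definition in_LO (j : nat) A B : bool :=
  ((size A).*2 <= j.+2)%N && ((size B).*2 <= j.-1)%N.

(* [A + B y] has a pole of order exactly j at O (given that it lies in L(jO)). *)
Definition pole_exact (j : nat) A B : Prop :=
  if odd j then (0 < size B)%N /\ (size B).*2.+1 = j else (size A).*2 = j.+2.

Lemma horner_xyD A1 B1 A2 B2 p :
  horner_xy (A1 + A2) (B1 + B2) p = horner_xy A1 B1 p + horner_xy A2 B2 p.
Proof. by rewrite /horner_xy !hornerD mulrDl addrACA. Qed.

Lemma horner_xyB A1 B1 A2 B2 p :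
  horner_xy (A1 - A2) (B1 - B2) p = horner_xy A1 B1 p - horner_xy A2 B2 p.
Proof. rewrite /horner_xy !hornerE; ring. Qed.

Lemma horner_xyZ c A B p : horner_xy (c *: A) (c *: B) p = c * horner_xy A B p.
Proof. rewrite /horner_xy !hornerE; ring. Qed.

Lemma horner_xy_mulXsubC A B a p :
  horner_xy (A * ('X - a%:P)) (B * ('X - a%:P)) p = (p.1 - a) * horner_xy A B p.
Proof. rewrite /horner_xy !hornerE; ring. Qed.

Lemma horner_xy_mulXsubC_eq0 A B a p : p.1 != a ->
  horner_xy (A * ('X - a%:P)) (B * ('X - a%:P)) p = 0 -> horner_xy A B p = 0.
Proof.
by rewrite horner_xy_mulXsubC => /negPf pa /eqP; rewrite mulf_eq0 subr_eq0 pa => /eqP.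
Qed.

Lemma horner_curve_rhs a : curve_rhs.[a] = a ^+ 3 + s * a + t.
Proof. by rewrite /curve_rhs !hornerE. Qed.

Lemma size_curve_rhs : size curve_rhs = 4%N.
Proof.
rewrite /curve_rhs -addrA size_polyDl size_polyXn //.
apply: leq_ltn_trans (size_polyD _ _) _; rewrite gtn_max.
rewrite (leq_ltn_trans (size_scale_leq _ _)) ?size_polyX //.
exact: leq_ltn_trans (size_polyC_leq1 _) _.
Qed.

Lemma on_curve_xy_fibre a b q : on_curve_xy (a, b) -> on_curve_xy q -> q.1 = a ->
  q = (a, b) \/ q = (a, - b).
Proof.
case: q => a' b' /eqP hab /eqP hq /= ea; subst a'.
have /eqP : (b' - b) * (b' + b) = 0 by rewrite -subr_sqr /= hq hab subrr.
rewrite mulf_eq0 subr_eq0 addr_eq0 => /orP [] /eqP ->; by [left | right].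
Qed.

Lemma factor_horner_xy A B a : A.[a] = 0 -> B.[a] = 0 ->
  exists A' B', A = A' * ('X - a%:P) /\ B = B' * ('X - a%:P).
Proof.
move=> /eqP hA /eqP hB.
have [A' ->] := factor_theorem A a hA; have [B' ->] := factor_theorem B a hB.
by exists A', B'.
Qed.

Lemma cross_factor_point A B C D a b :
  horner_xy A B (a, b) = 0 -> horner_xy C D (a, b) = 0 ->
  exists A' B' C' D', D * A - C * B = (D' * A' - C' * B') * ('X - a%:P) /\
    forall p, p.1 != a -> horner_xy A B p = 0 -> horner_xy C D p = 0 ->
      horner_xy A' B' p = 0 /\ horner_xy C' D' p = 0.
Proof.
move=> fab hab; rewrite /horner_xy /= in fab hab.
have [/eqP Ba0 | Ba0] := boolP (B.[a] == 0).
  have Aa0 : A.[a] = 0 by move: fab; rewrite Ba0 mul0r addr0.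
  have [A' [B' [-> ->]]] := factor_horner_xy Aa0 Ba0.
  exists A', B', C, D; split; first ring.
  by move=> p pa /(horner_xy_mulXsubC_eq0 pa).
(* subtracting [l (A + B y)] from [C + D y] kills both of its coefficients at [a] *)
pose l := D.[a] / B.[a].
have C1a0 : (C - l *: A).[a] = 0.
  have eA : A.[a] = - (B.[a] * b) by rewrite -(addrK (B.[a] * b) A.[a]) fab sub0r.
  have eC : C.[a] = - (D.[a] * b) by rewrite -(addrK (D.[a] * b) C.[a]) hab sub0r.
  by rewrite !hornerE eA eC /l; field.
have D1a0 : (D - l *: B).[a] = 0 by rewrite !hornerE /l mulfVK ?subrr.
have [C' [D' [eC eD]]] := factor_horner_xy C1a0 D1a0.
exists A, B, C', D'; split.
  have -> : D * A - C * B = (D - l *: B) * A - (C - l *: A) * B.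
    by rewrite -!mul_polyC; ring.
  by rewrite eC eD; ring.
move=> p pa fp hp; split=> //; apply: (horner_xy_mulXsubC_eq0 pa).
by rewrite -eC -eD horner_xyB horner_xyZ fp hp mulr0 subr0.
Qed.

Lemma cross_factor_fibre A B C D a b : b != - b ->
  {in [:: (a, b); (a, - b)], forall p, horner_xy A B p = 0} ->
  {in [:: (a, b); (a, - b)], forall p, horner_xy C D p = 0} ->
  exists A' B' C' D', D * A - C * B = (D' * A' - C' * B') * ('X - a%:P) ^+ 2 /\
    forall p, p.1 != a -> horner_xy A B p = 0 -> horner_xy C D p = 0 ->
      horner_xy A' B' p = 0 /\ horner_xy C' D' p = 0.
Proof.
move=> bNb f0 h0.
have fibre0 P Q : {in [:: (a, b); (a, - b)], forall p, horner_xy P Q p = 0} ->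
    P.[a] = 0 /\ Q.[a] = 0.
  move=> PQ0; have PQab := PQ0 (a, b) (mem_head _ _).
  have PQa'b : horner_xy P Q (a, - b) = 0 by apply: PQ0; rewrite !inE eqxx orbT.
  have : Q.[a] * (b - - b) = horner_xy P Q (a, b) - horner_xy P Q (a, - b).
    by rewrite /horner_xy /=; ring.
  rewrite PQab PQa'b subrr => /eqP; rewrite mulf_eq0 subr_eq0 (negPf bNb) orbF.
  by move=> /eqP Qa0; move: PQab; rewrite /horner_xy /= Qa0 mul0r addr0.
have [[Aa0 Ba0] [Ca0 Da0]] := (fibre0 _ _ f0, fibre0 _ _ h0).
have [A' [B' [-> ->]]] := factor_horner_xy Aa0 Ba0.
have [C' [D' [-> ->]]] := factor_horner_xy Ca0 Da0.
exists A', B', C', D'; split; first ring.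
move=> p pa /(horner_xy_mulXsubC_eq0 pa) fp /(horner_xy_mulXsubC_eq0 pa) hp.
by split.
Qed.

Lemma abscissa_poly_cons p X :
  abscissa_poly (p :: X) = ('X - p.1%:P) * abscissa_poly X.
Proof. by rewrite /abscissa_poly big_cons. Qed.

(* The cross term [D A - C B] of [A + B y] and [C + D y] vanishes at [x(p)] for
   every common zero [p], and to second order when [p] and its opposite both are. *)
Lemma abscissa_poly_dvd_cross X A B C D :
  uniq X -> all on_curve_xy X ->
  {in X, forall p, horner_xy A B p = 0} -> {in X, forall p, horner_xy C D p = 0} ->
  abscissa_poly X %| D * A - C * B.
Proof.
have [m] := ubnP (size X); elim: m X A B C D => // m IH [|[a b] X] A B C D ltXm.
  by rewrite /abscissa_poly big_nil dvd1p.
rewrite /= => /andP [abX uX] /andP [ab onX] f0 h0.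
have f0ab : horner_xy A B (a, b) = 0 by apply: f0; apply: mem_head.
have h0ab : horner_xy C D (a, b) = 0 by apply: h0; apply: mem_head.
have fibreX p : p \in X -> p.1 = a -> p = (a, - b).
  move=> pX pa; case: (on_curve_xy_fibre ab (allP onX p pX) pa) => // pab.
  by move: abX; rewrite -pab pX.
have IHsub Y A' B' C' D' : (size Y < m)%N -> uniq Y -> {subset Y <= X} ->
    {in Y, forall p, p.1 != a} ->
    (forall p, p.1 != a -> horner_xy A B p = 0 -> horner_xy C D p = 0 ->
       horner_xy A' B' p = 0 /\ horner_xy C' D' p = 0) ->
    abscissa_poly Y %| D' * A' - C' * B'.
  move=> ltYm uY YX Ya off.
  have offY p : p \in Y -> horner_xy A' B' p = 0 /\ horner_xy C' D' p = 0.
    by move=> pY; apply: off; rewrite ?Ya // ?f0 ?h0 // inE YX ?orbT.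
  apply: IH => // [|p /offY [] | p /offY []] //.
  by apply/allP => p /YX /(allP onX).
rewrite abscissa_poly_cons /=.
have [a_b | a_b] := boolP ((a, - b) \in X).
  have bNb : b != - b by apply: contraNneq abX => {1}->.
  have fibre0 P Q : horner_xy P Q (a, b) = 0 -> {in X, forall p, horner_xy P Q p = 0} ->
      {in [:: (a, b); (a, - b)], forall p, horner_xy P Q p = 0}.
    by move=> PQab PQX p; rewrite !inE => /orP [] /eqP ->; last apply: PQX.
  have [A' [B' [C' [D' [-> off]]]]] := cross_factor_fibre bNb
    (fibre0 _ _ f0ab (sub_in1 (mem_behead (s := _ :: _)) f0))
    (fibre0 _ _ h0ab (sub_in1 (mem_behead (s := _ :: _)) h0)).
  rewrite /abscissa_poly (perm_big _ (perm_to_rem a_b)) big_cons -/(abscissa_poly _) /=.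
  rewrite mulrA -expr2 mulrC; apply: dvdp_mul => //.
  apply: IHsub off.
  - by rewrite size_rem //; move: ltXm => /=; lia.
  - exact: rem_uniq.
  - by move=> p /mem_rem.
  - move=> p pX'; apply/eqP => pa; have := pX'.
    by rewrite (fibreX p (mem_rem pX') pa) (mem_rem_uniq _ uX) inE eqxx.
have [A' [B' [C' [D' [-> off]]]]] := cross_factor_point f0ab h0ab.
rewrite mulrC; apply: dvdp_mul => //; apply: IHsub off => //.
move=> p pX; apply/eqP => pa; move: a_b.
by rewrite -(fibreX p pX pa) pX.
Qed.

Lemma size_abscissa_poly X : size (abscissa_poly X) = (size X).+1.
Proof. by rewrite /abscissa_poly size_prod_XsubC. Qed.

(* On the curve [y (A + B y) = B g + A y] with [g = curve_rhs], so the cross term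
   of [A + B y] and [B g + A y], the norm [A^2 - B^2 g], vanishes on X. *)
Lemma abscissa_poly_dvd_norm X A B : uniq X -> all on_curve_xy X ->
  {in X, forall p, horner_xy A B p = 0} ->
  abscissa_poly X %| A * A - B * curve_rhs * B.
Proof.
move=> uX onX f0; apply: abscissa_poly_dvd_cross => // -[a b] pX.
have /eqP onp := allP onX _ pX; rewrite /= in onp.
rewrite /horner_xy /= hornerM horner_curve_rhs -onp.
by rewrite -[RHS](mulr0 b) -(f0 _ pX) /horner_xy /=; ring.
Qed.

Lemma size_sqr_poly A : size (A * A) = (size A).*2.-1.
Proof.
have [->|nA] := eqVneq A 0; first by rewrite mul0r size_poly0.
by rewrite size_mul // addnn.
Qed.

Lemma size_xy_norm A B : B != 0 ->
  size (A * A - B * curve_rhs * B) = maxn (size A).*2.-1 ((size B).*2 + 2).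
Proof.
move=> nB; have ng : curve_rhs != 0 by rewrite -size_poly_gt0 size_curve_rhs.
have szBgB : size (B * curve_rhs * B) = ((size B).*2 + 2)%N.
  have := size_poly_gt0 B; rewrite nB size_mul ?mulf_neq0 // size_mul //.
  by rewrite size_curve_rhs; size_lia.
(* the two sizes have different parities, so no cancellation can occur *)
have [A0|nA] := eqVneq A 0.
  by rewrite A0 mul0r sub0r size_polyN szBgB size_poly0 max0n.
have := size_sqr_poly A; have := size_poly_gt0 A; rewrite nA.
case: (ltngtP (size (A * A)) (size (B * curve_rhs * B))) => [lt _ eAA|lt _ eAA|];
  last size_lia.
  by rewrite addrC size_polyDl size_polyN // szBgB -eAA (maxn_idPr (ltnW _)) // -szBgB.
by rewrite size_polyDl ?size_polyN // -eAA (maxn_idPl (ltnW _)) // -szBgB.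
Qed.

Lemma pole_exact_of_zeros j X A B : uniq X -> all on_curve_xy X -> size X = j ->
  in_LO j A B -> (A != 0) || (B != 0) -> {in X, forall p, horner_xy A B p = 0} ->
  pole_exact j A B.
Proof.
move=> uX onX szX /andP [szA szB] nAB f0.
have /dvdp_leq := abscissa_poly_dvd_norm uX onX f0.
rewrite size_abscissa_poly szX /pole_exact.
have [B0|nB] := eqVneq B 0.
  move: nAB; rewrite B0 eqxx orbF mul0r mulr0 subr0 => nA.
  rewrite mulf_neq0 // size_sqr_poly => /(_ isT).
  by have := odd_double_half j; case: (odd j) => /=; size_lia.
rewrite size_xy_norm // -size_poly_gt0 size_xy_norm //.
have := size_poly_gt0 B; rewrite nB.
by have := odd_double_half j; case: (odd j) => /=; size_lia.
Qed.

Lemma size_cross_pole_exact j A B C D :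
  in_LO j A B -> pole_exact j A B -> in_LO j.+1 C D -> pole_exact j.+1 C D ->
  size (D * A - C * B) = j.
Proof.
move=> /andP [szA szB] + /andP [szC szD]; rewrite /pole_exact /=.
have := size_polyMleq D A; have := size_polyMleq C B.
have := odd_double_half j; case: (odd j) => /= ej szCB szDA.
- move=> [B0 eB] eC; have [nB nC] : B != 0 /\ C != 0.
    by rewrite -!size_poly_gt0; size_lia.
  have eCB := size_mul nC nB.
  by rewrite addrC size_polyDl size_polyN eCB; size_lia.
- move=> eA [D0 eD]; have [nA nD] : A != 0 /\ D != 0.
    by rewrite -!size_poly_gt0; size_lia.
  have eDA := size_mul nD nA.
  by rewrite size_polyDl ?size_polyN eDA; size_lia.
Qed.

Lemma pole_exact_not_vanishing j X A B C D : (0 < j)%N ->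
  uniq X -> all on_curve_xy X -> size X = j ->
  in_LO j A B -> (A != 0) || (B != 0) -> in_LO j.+1 C D -> pole_exact j.+1 C D ->
  {in X, forall p, horner_xy A B p = 0} -> ~ {in X, forall p, horner_xy C D p = 0}.
Proof.
move=> j0 uX onX szX fL nf hL hj f0 h0.
have fj := pole_exact_of_zeros uX onX szX fL nf f0.
have szR := size_cross_pole_exact fL fj hL hj.
have /dvdp_leq := abscissa_poly_dvd_cross uX onX f0 h0.
by rewrite -size_poly_gt0 szR size_abscissa_poly szX ltnn => /(_ j0).
Qed.

Lemma in_LO_lin j c A1 B1 A2 B2 : in_LO j A1 B1 -> in_LO j A2 B2 ->
  in_LO j (A1 + c *: A2) (B1 + c *: B2).
Proof.
move=> /andP [szA1 szB1] /andP [szA2 szB2]; apply/andP; split.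
- have := size_polyD A1 (c *: A2); have := size_scale_leq c A2; size_lia.
- have := size_polyD B1 (c *: B2); have := size_scale_leq c B2; size_lia.
Qed.

Lemma in_LOD j A1 B1 A2 B2 : in_LO j A1 B1 -> in_LO j A2 B2 -> in_LO j (A1 + A2) (B1 + B2).
Proof. by move=> f1 f2; rewrite -[A2]scale1r -[B2]scale1r; apply: in_LO_lin. Qed.

Lemma in_LOB j A1 B1 A2 B2 : in_LO j A1 B1 -> in_LO j A2 B2 -> in_LO j (A1 - A2) (B1 - B2).
Proof. by rewrite -!scaleN1r; apply: in_LO_lin. Qed.

Lemma in_LO_le j k A B : (j <= k)%N -> in_LO j A B -> in_LO k A B.
Proof. by move=> le_jk /andP [szA szB]; apply/andP; split; lia. Qed.

Lemma pole_exactD j M1 M2 A B : (0 < j)%N -> pole_exact j M1 M2 -> in_LO j.-1 A B ->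
  pole_exact j (M1 + A) (M2 + B).
Proof.
rewrite /pole_exact => j0 + /andP [szA szB]; have := odd_double_half j.
case: (odd j) => /= ej.
- by move=> [M20 eM2]; rewrite size_polyDl; size_lia.
- by move=> eM1; rewrite size_polyDl; size_lia.
Qed.

Definition mono_polyA (k r : nat) : {poly F} :=
  if (r < k./2.+1)%N then 'X^r else 0.

Definition mono_polyB (k r : nat) : {poly F} :=
  if (r < k./2.+1)%N then 0 else 'X^(r - k./2.+1).

Lemma horner_xy_mono k r a b :
  horner_xy (mono_polyA k r) (mono_polyB k r) (a, b) = mono k r a b.
Proof. by rewrite /horner_xy /mono_polyA /mono_polyB /mono; case: ifP; rewrite !hornerE. Qed.

(* the index of the basis monomial with a pole of order exactly k *)
Definition top_index (k : nat) : nat := if odd k then k.-1 else k./2.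

Lemma in_LO_mono k r : (r < k)%N -> in_LO k (mono_polyA k r) (mono_polyB k r).
Proof.
rewrite /in_LO /mono_polyA /mono_polyB => lt_rk; have := odd_double_half k.
by case: ltnP; rewrite ?size_polyXn ?size_poly0; case: (odd k) => /=; lia.
Qed.

Lemma in_LO_pred_mono k r : (r < k)%N -> r != top_index k ->
  in_LO k.-1 (mono_polyA k r) (mono_polyB k r).
Proof.
rewrite /in_LO /mono_polyA /mono_polyB /top_index => lt_rk; have := odd_double_half k.
by case: ltnP; rewrite ?size_polyXn ?size_poly0; case: (odd k) => /= ek /eqP; lia.
Qed.

Lemma pole_exact_top k : (1 < k)%N ->
  pole_exact k (mono_polyA k (top_index k)) (mono_polyB k (top_index k)).
Proof.
rewrite /pole_exact /mono_polyA /mono_polyB /top_index => lt1k.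
have := odd_double_half k; case: (odd k) => /= ek.
  by rewrite ifN ?size_polyXn; lia.
by rewrite ltnSn size_polyXn; lia.
Qed.

Lemma LO_basis_coords k A B : (0 < k)%N -> in_LO k A B ->
  exists u : 'rV[F]_k,
    forall a b, \sum_(r < k) u 0 r * mono k r a b = horner_xy A B (a, b).
Proof.
move=> k0 /andP [szA szB]; set K := k./2.+1.
exists (\row_(r < k) if (r < K)%N then A`_r else B`_(r - K)) => a b.
pose G r := if (r < K)%N then A`_r * a ^+ r else B`_(r - K) * (a ^+ (r - K) * b).
rewrite (eq_bigr (G \o val)); last by move=> r _; rewrite mxE /mono /G /= -/K; case: ifP.
rewrite -(big_mkord xpredT G) (big_cat_nat _ (n := K)) /=; try lia.
rewrite /horner_xy /=; congr (_ + _).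
  rewrite (horner_coef_wide _ (n := K)); last lia.
  rewrite -(big_mkord xpredT (fun i => A`_i * a ^+ i)).
  by apply: eq_big_nat => r /andP [_ ltrK]; rewrite /G ltrK.
rewrite -{1}(add0n K) big_addn (horner_coef_wide _ (n := k - K)); last lia.
rewrite -(big_mkord xpredT (fun i => B`_i * a ^+ i)) mulr_suml; apply: eq_big_nat => r _.
by rewrite /G ltnNge leq_addl /= addnK mulrA.
Qed.

End CurveFunctions.

Section Interpolation.
Context {F : finFieldType} (s t : F).
Implicit Types (A B C D : {poly F}) (X : seq (F * F)).

(* Pigeonhole: L(jO) has j coefficients, more than the number of conditions. *)
Lemma exists_vanishing_LO j X : (size X < j)%N ->
  exists A B, [/\ in_LO j A B, (A != 0) || (B != 0) & {in X, forall p, horner_xy A B p = 0}].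
Proof.
move=> ltXj.
pose poly_of n (c : n.-tuple F) : {poly F} := \poly_(i < n) c`_i.
have poly_of_inj n : injective (poly_of n).
  move=> c1 c2 /polyP e; apply: eq_from_tnth => i; rewrite !(tnth_nth 0).
  by have := e i; rewrite !coef_poly ltn_ord.
pose values (c : (j./2.+1).-tuple F * (j.-1./2).-tuple F) : 'rV[F]_(size X) :=
  \row_(i < size X) horner_xy (poly_of _ c.1) (poly_of _ c.2) (nth (0, 0) X i).
have /injectivePn [[c1 c2] [[d1 d2] neq_cd e]] : ~~ injectiveb values.
  apply/injectiveP => /leq_card; rewrite card_prod !card_tuple card_mx mul1n -expnD.
  by rewrite leqNgt ltn_exp2l ?card_finNzRing_gt1 //; lia.
exists (poly_of _ c1 - poly_of _ d1), (poly_of _ c2 - poly_of _ d2); split.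
- have inL (c : (j./2.+1).-tuple F * (j.-1./2).-tuple F) :
      in_LO j (poly_of _ c.1) (poly_of _ c.2).
    apply/andP; split; rewrite /poly_of.
      by have := size_poly (j./2.+1) (nth 0 c.1); size_lia.
    by have := size_poly (j.-1./2) (nth 0 c.2); size_lia.
  exact: in_LOB (inL (c1, c2)) (inL (d1, d2)).
- apply: contraNT neq_cd; rewrite negb_or !negbK !subr_eq0 => /andP [/eqP e1 /eqP e2].
  by rewrite (poly_of_inj _ _ _ e1) (poly_of_inj _ _ _ e2).
- move=> p pX; rewrite horner_xyB; apply/eqP; rewrite subr_eq0; apply/eqP.
  have ltpX : (index p X < size X)%N by rewrite index_mem.
  have := congr1 (fun r : 'rV[F]_(size X) => r 0 (Ordinal ltpX)) e.
  by rewrite !mxE /= nth_index.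
Qed.

Lemma exists_pole_exact_vanishing m X : (1 < m)%N ->
  (forall g, exists A B, in_LO m.-1 A B /\ {in X, forall p, horner_xy A B p = g p}) ->
  exists C D, [/\ in_LO m C D, pole_exact m C D & {in X, forall p, horner_xy C D p = 0}].
Proof.
move=> lt1m interp.
pose M1 : {poly F} := mono_polyA m (top_index m).
pose M2 : {poly F} := mono_polyB m (top_index m).
have [A [B [fL fX]]] := interp (fun p => - horner_xy M1 M2 p).
exists (M1 + A), (M2 + B); split.
- by apply: in_LOD; [apply: in_LO_mono; rewrite /top_index; case: odd; lia|
    apply: in_LO_le fL; lia].
- by apply: pole_exactD; [lia | apply: pole_exact_top |].
- by move=> p pX; rewrite horner_xyD fX // addrN.
Qed.

Lemma LO_interpolation m X (g : F * F -> F) :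
  uniq X -> all (on_curve_xy s t) X -> (size X < m)%N ->
  exists A B, in_LO m A B /\ {in X, forall p, horner_xy A B p = g p}.
Proof.
elim: m X g => // m IH X g uX onX ltXm.
have [ltXm'|] := ltnP (size X) m.
  have [A [B [fL fX]]] := IH X g uX onX ltXm'.
  by exists A, B; split=> //; apply: in_LO_le fL.
case: X uX onX ltXm => [_ _ _ _|p X /= /andP [pX uX] /andP [onp onX] ltXm lemX].
  by exists 0, 0; rewrite /in_LO size_poly0.
have {ltXm lemX} [szX m0] : size X = m.-1 /\ (0 < m)%N by lia.
have ltXm : (size X < m)%N by lia.
have [A0 [B0 [f0L f0p f0X]]] : exists A0 B0, [/\ in_LO m.+1 A0 B0,
    horner_xy A0 B0 p != 0 & {in X, forall q, horner_xy A0 B0 q = 0}].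
  have [A [B [fL nf fX]]] := exists_vanishing_LO ltXm.
  have [fp|fp] := eqVneq (horner_xy A B p) 0; last first.
    by exists A, B; split=> //; apply: in_LO_le fL.
  have [C [D [hL hexact hX]]] :=
    @exists_pole_exact_vanishing m.+1 X m0 (fun g => IH X g uX onX ltXm).
  have [hp|hp] := eqVneq (horner_xy C D p) 0; last by exists C, D.
  have vanish_pX E G : horner_xy E G p = 0 -> {in X, forall q, horner_xy E G q = 0} ->
      {in p :: X, forall q, horner_xy E G q = 0}.
    by move=> Ep EX q; rewrite inE => /predU1P [->|/EX].
  exfalso; apply: (pole_exact_not_vanishing (s := s) (t := t) m0 _ _ _ fL nf hL hexact
    (vanish_pX _ _ fp fX) (vanish_pX _ _ hp hX)) => /=.
  - by rewrite pX.
  - by rewrite onp.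
  - by rewrite szX prednK.
have [A1 [B1 [f1L f1X]]] := IH X g uX onX ltXm.
pose c := (g p - horner_xy A1 B1 p) / horner_xy A0 B0 p.
exists (A1 + c *: A0), (B1 + c *: B0); split.
  by apply: in_LO_lin f0L; apply: in_LO_le f1L.
move=> q; rewrite inE horner_xyD horner_xyZ => /predU1P [->|qX].
  by rewrite /c mulfVK // addrC subrK.
by rewrite f0X // mulr0 addr0 f1X.
Qed.

(* Interpolation isolates any single point of the support of [w]. *)
Lemma LO_annihilator_eq0 n (alpha beta : 'I_n -> F) (T : {set 'I_n}) Y m
    (w : 'I_n -> F) :
  (forall i, on_curve_xy s t (alpha i, beta i)) ->
  injective (fun i => (alpha i, beta i)) ->
  uniq Y -> all (on_curve_xy s t) Y -> (forall i, (alpha i, beta i) \notin Y) ->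
  (#|T| + size Y < m)%N -> (forall i, i \notin T -> w i = 0) ->
  (forall A B, in_LO m A B -> {in Y, forall p, horner_xy A B p = 0} ->
     \sum_i w i * horner_xy A B (alpha i, beta i) = 0) ->
  forall i, w i = 0.
Proof.
move=> onD injD uY onY DY ltTYm wT orth_w i.
have [iT|/wT //] := boolP (i \in T).
pose X := [seq (alpha j, beta j) | j <- enum T] ++ Y.
have uX : uniq X.
  rewrite cat_uniq uY andbT (map_inj_uniq injD) enum_uniq /=.
  by apply/hasPn => p pY; apply/mapP => -[j _ ej]; move: (DY j); rewrite -ej pY.
have onX : all (on_curve_xy s t) X.
  by rewrite all_cat onY andbT; apply/allP => p /mapP [j _ ->].
have ltXm : (size X < m)%N by rewrite size_cat size_map -cardE.
have Xi : (alpha i, beta i) \in X by rewrite mem_cat map_f ?mem_enum.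
have [A [B [fL fX]]] := LO_interpolation (fun p => (p == (alpha i, beta i))%:R) uX onX ltXm.
have fY : {in Y, forall p, horner_xy A B p = 0}.
  move=> p pY; rewrite fX ?mem_cat ?pY ?orbT //.
  by case: eqP => // ep; move: (DY i); rewrite -ep pY.
rewrite -[RHS](orth_w A B fL fY) (bigD1 i) //= fX // eqxx mulr1 big1 ?addr0 // => j ji.
have [jT|/wT -> ] := boolP (j \in T); last by rewrite mul0r.
rewrite fX ?mem_cat ?map_f ?mem_enum //.
by case: eqP => [/injD eji|]; [move: ji; rewrite eji eqxx | rewrite mulr0].
Qed.

End Interpolation.

Section ResidueCodes.
Context {F : finFieldType} {n : nat} (alpha beta : 'I_n -> F).
Implicit Types (k : nat) (v : 'rV[F]_n) (A B : {poly F}).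

Lemma Hmat_syndromeE k v r :
  (Hmat k alpha beta *m v^T) r 0 = \sum_i mono k r (alpha i) (beta i) * v 0 i.
Proof. by rewrite mxE; apply: eq_bigr => i _; rewrite !mxE. Qed.

Lemma dot_codeword_syndrome k v (u : 'rV[F]_k) :
  (v *m (u *m Hmat k alpha beta)^T) 0 0 = \sum_r u 0 r * (Hmat k alpha beta *m v^T) r 0.
Proof.
rewrite trmx_mul mulmxA -{1}[v]trmxK -trmx_mul mxE; apply: eq_bigr => r _.
by rewrite mulrC [_^T 0 r]mxE [u^T r 0]mxE.
Qed.

Lemma dot_codeword_horner_xy k v (u : 'rV[F]_k) A B :
  (forall a b, \sum_(r < k) u 0 r * mono k r a b = horner_xy A B (a, b)) ->
  (v *m (u *m Hmat k alpha beta)^T) 0 0 = \sum_i v 0 i * horner_xy A B (alpha i, beta i).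
Proof.
move=> uAB; rewrite dot_codeword_syndrome.
under eq_bigr do rewrite Hmat_syndromeE mulr_sumr.
rewrite exchange_big; apply: eq_bigr => i _; rewrite -uAB mulr_sumr.
by apply: eq_bigr => r _; rewrite [RHS]mulrC -mulrA.
Qed.

Lemma in_dual_codeP (C : {set 'rV[F]_n}) v :
  reflect (forall c, c \in C -> v *m c^T = 0) (v \in dual_code C).
Proof.
rewrite inE; apply: (iffP forallP) => vC c; first by move/(implyP (vC c))/eqP.
by apply/implyP => /vC ->.
Qed.

Lemma COmega_orthogonal k v A B : (0 < k)%N -> v \in COmega k alpha beta ->
  in_LO k A B -> \sum_i v 0 i * horner_xy A B (alpha i, beta i) = 0.
Proof.
move=> k0 /in_dual_codeP vC fL; have [u uAB] := LO_basis_coords k0 fL.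
rewrite -(dot_codeword_horner_xy v uAB) vC ?mxE //.
by rewrite inE; apply/existsP; exists u.
Qed.

Lemma CL_minus_affine_codeword k a b (u : 'rV[F]_k) :
  \sum_r u 0 r * mono k r a b = 0 ->
  u *m Hmat k alpha beta \in CL_minus k alpha beta (PAff a b).
Proof.
move=> u0; rewrite inE; apply/existsP; exists u; rewrite eqxx andbT.
by apply/eqP/rowP => i; rewrite ord1 !mxE -[RHS]u0; apply: eq_bigr => r _; rewrite mxE.
Qed.

Lemma COmega_minus_affine_orthogonal k a b v A B : (0 < k)%N ->
  v \in COmega_minus k alpha beta (PAff a b) ->
  in_LO k A B -> horner_xy A B (a, b) = 0 ->
  \sum_i v 0 i * horner_xy A B (alpha i, beta i) = 0.
Proof.
move=> k0 /in_dual_codeP vC fL fab; have [u uAB] := LO_basis_coords k0 fL.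
rewrite -(dot_codeword_horner_xy v uAB) vC ?mxE //.
by apply: CL_minus_affine_codeword; rewrite uAB.
Qed.

Lemma COmega_of_syndrome0 k v : Hmat k alpha beta *m v^T = 0 -> v \in COmega k alpha beta.
Proof.
move=> Sv0; apply/in_dual_codeP => c; rewrite inE => /existsP [u /eqP ->].
apply/rowP => i; rewrite ord1 dot_codeword_syndrome Sv0 mxE.
by apply: big1 => r _; rewrite mxE mulr0.
Qed.

Lemma COmega_minus_dist_ge (s t : F) k (P : point F) v c :
  (forall i, on_curve_xy s t (alpha i, beta i)) -> injective (fun i => (alpha i, beta i)) ->
  on_curve s t P -> (forall i, P <> PAff (alpha i) (beta i)) -> (1 < k)%N ->
  v \in COmega_minus k alpha beta P -> c \in COmega k alpha beta -> v != c ->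
  (k.-1 <= hdist v c)%N.
Proof.
move=> onD injD onP PD k2 vCP cC; apply: contraNleq => lt_vc; apply/eqP/rowP => i.
apply/eqP; rewrite -subr_eq0; apply/eqP; move: i.
pose T := [set i | v 0 i != c 0 i].
have wT i : i \notin T -> v 0 i - c 0 i = 0 by rewrite inE negbK => /eqP ->; rewrite subrr.
have orth m Y : (0 < m)%N -> (m <= k)%N ->
    (forall A B, in_LO m A B -> {in Y, forall p, horner_xy A B p = 0} ->
       \sum_i v 0 i * horner_xy A B (alpha i, beta i) = 0) ->
    forall A B, in_LO m A B -> {in Y, forall p, horner_xy A B p = 0} ->
      \sum_i (v 0 i - c 0 i) * horner_xy A B (alpha i, beta i) = 0.
  move=> m0 le_mk orth_v A B fL fY; under eq_bigr do rewrite mulrBl.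
  rewrite sumrB orth_v // (COmega_orthogonal _ cC) ?subrr //; first lia.
  exact: in_LO_le fL.
case: P onP PD vCP => [|a b] onP PD vCP.
  apply: (LO_annihilator_eq0 (T := T) (Y := [::]) (m := k.-1) onD injD) => //.
    by rewrite addn0.
  by apply: orth; [lia | lia | move=> A B fL _; apply: (COmega_orthogonal _ vCP fL); lia].
apply: (LO_annihilator_eq0 (T := T) (Y := [:: (a, b)]) (m := k) onD injD) => //.
- by rewrite /= andbT.
- by move=> i; rewrite inE; apply: contra_not_neq (PD i) => -[-> ->].
- by rewrite /= (_ : #|T| = hdist v c) //; lia.
apply: orth; [lia | lia |] => A B fL fY.
by apply: (COmega_minus_affine_orthogonal _ vCP fL); [lia | apply: fY; rewrite inE].
Qed.

Lemma syndrome_at_infinity k v : (1 < k)%N -> v \in COmega_minus k alpha beta PInf ->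
  if odd k then
    forall r : 'I_k, (Hmat k alpha beta *m v^T) r 0 =
      (if (r : nat) == k.-1 then \sum_i alpha i ^+ (k - 3)./2 * beta i * v 0 i else 0)
  else
    forall r : 'I_k, (Hmat k alpha beta *m v^T) r 0 =
      (if (r : nat) == k./2 then \sum_i alpha i ^+ k./2 * v 0 i else 0).
Proof.
move=> k2 vC.
have synd r : (Hmat k alpha beta *m v^T) r 0 =
    if (r : nat) == top_index k then \sum_i mono k r (alpha i) (beta i) * v 0 i else 0.
  rewrite Hmat_syndromeE; case: eqP => // /eqP r_top.
  rewrite -[RHS](COmega_orthogonal _ vC (in_LO_pred_mono (ltn_ord r) r_top)); last lia.
  by apply: eq_bigr => i _; rewrite horner_xy_mono mulrC.
rewrite /top_index in synd; have := odd_double_half k.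
case: (odd k) synd => synd ek r; rewrite synd; case: eqP => // ->.
  apply: eq_bigr => i _; rewrite /mono ifN; last lia.
  by rewrite (_ : k.-1 - k./2.+1 = (k - 3)./2)%N //; lia.
by apply: eq_bigr => i _; rewrite /mono ltnSn.
Qed.

Lemma syndrome_affine k a b v : (0 < k)%N ->
  v \in COmega_minus k alpha beta (PAff a b) ->
  Hmat k alpha beta *m v^T = (\sum_i v 0 i) *: evcol k a b.
Proof.
move=> k0 /in_dual_codeP vC; set S := Hmat k alpha beta *m v^T; set e := evcol k a b.
pose r0 : 'I_k := Ordinal k0.
have e0 : e r0 0 = 1 by rewrite mxE /mono /= expr0.
have S0 : S r0 0 = \sum_i v 0 i.
  by rewrite Hmat_syndromeE; apply: eq_bigr => i _; rewrite /mono /= expr0 mul1r.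
have orth_e (u : 'rV[F]_k) : \sum_r u 0 r * e r 0 = 0 -> \sum_r u 0 r * S r 0 = 0.
  move=> ue0; rewrite -dot_codeword_syndrome vC ?mxE //; apply: CL_minus_affine_codeword.
  by rewrite -[RHS]ue0; apply: eq_bigr => r _; rewrite mxE.
(* testing against [delta_r - e_r delta_0], which is orthogonal to e *)
apply/colP => r; rewrite [RHS]mxE -S0.
pose u : 'rV[F]_k := \row_j ((j == r)%:R - e r 0 * (j == r0)%:R).
have delta (x : 'I_k -> F) i : \sum_j (j == i)%:R * x j = x i.
  by rewrite (bigD1 i) //= eqxx mul1r big1 ?addr0 // => j /negPf ->; rewrite mul0r.
have uE (x : 'I_k -> F) : \sum_j u 0 j * x j = x r - e r 0 * x r0.
  under eq_bigr do rewrite mxE mulrBl -mulrA.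
  by rewrite sumrB -mulr_sumr !delta.
have := orth_e u; rewrite !uE e0 mulr1 subrr => /(_ erefl) /eqP.
by rewrite subr_eq0 mulrC => /eqP.
Qed.

End ResidueCodes.

Lemma dist_to_le (F : finFieldType) n (C : {set 'rV[F]_n}) u : (dist_to C u <= n)%N.
Proof.
apply: (big_ind (fun x => x <= n)%N) => // [x y xn _ | c _].
  exact: leq_trans (geq_minl x y) xn.
by rewrite -[n in (_ <= n)%N]card_ord max_card.
Qed.

Lemma deep_hole_of_dist_ge (F : finFieldType) n (C : {set 'rV[F]_n}) v :
  (forall c, c \in C -> (covering_radius C <= hdist v c)%N) -> deep_hole C v.
Proof.
move=> dist_vC; apply/eqP; rewrite eqn_leq (@leq_bigmax _ (dist_to C) v) /=.
apply: (big_ind (fun x => covering_radius C <= x)%N) => //.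
- by apply/bigmax_leqP => u _; apply: dist_to_le.
- by move=> x y; rewrite leq_min => -> ->.
Qed.

Unset Implicit Arguments.

Theorem theorem3p6
  (F : finFieldType) (s t : F) (n k : nat) (alpha beta : 'I_n -> F)
  (hodd : odd #|F|)
  (hE : 4%:R * s ^+ 3 + 27%:R * t ^+ 2 != 0)
  (hD : forall i : 'I_n, beta i ^+ 2 = alpha i ^+ 3 + s * alpha i + t)
  (hinj : injective (fun i : 'I_n => (alpha i, beta i)))
  (hk2 : (2 <= k)%N) (hkn : (k <= n - 2)%N)
  (hrho : covering_radius (COmega k alpha beta) = (k - 1)%N)
  (P : point F) (hP : on_curve s t P)
  (hPD : forall i : 'I_n, P <> PAff (alpha i) (beta i)) :
  forall v : 'rV[F]_n,
    v \in COmega_minus k alpha beta P ->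
    v \notin COmega k alpha beta ->
    [/\ deep_hole (COmega k alpha beta) v,
        (P = PInf ->
           if odd k then
             forall r : 'I_k, (Hmat k alpha beta *m v^T) r 0 =
               (if (r : nat) == k.-1 then
                  \sum_(i < n) alpha i ^+ (k - 3)./2 * beta i * v 0 i
                else 0)
           else
             forall r : 'I_k, (Hmat k alpha beta *m v^T) r 0 =
               (if (r : nat) == k./2 then
                  \sum_(i < n) alpha i ^+ k./2 * v 0 i
                else 0))
      & (forall a b : F, P = PAff a b ->
           Hmat k alpha beta *m v^T = (\sum_(i < n) v 0 i) *: evcol k a b
           /\ \sum_(i < n) v 0 i != 0)].
Proof.
move=> v vCP vC.
have onD i : on_curve_xy s t (alpha i, beta i) by apply/eqP; apply: hD.
split.
- apply: deep_hole_of_dist_ge => c cC; rewrite hrho subn1.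
  by apply: (COmega_minus_dist_ge onD hinj hP hPD hk2 vCP cC); apply: contraNneq vC => ->.
- by move=> P0; subst P; apply: syndrome_at_infinity.
- move=> a b Pab; subst P; have synd := syndrome_affine (ltnW hk2) vCP; split=> //.
  by apply: contraNneq vC => sum0; apply: COmega_of_syndrome0; rewrite synd sum0 scale0r.
Qed.
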